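(* Let $Q\in\mathbb{R}^{d\times N}$ be the matrix whose columns are unit vectors $q_1,\dots,q_N\in\mathcal S^{d-1}$, and fix $v\in\mathcal S^{d-1}$. Define \[\mathcal C_{\mathrm{eig}}=\{x\in\mathbb{R}^N: x\ge0,\ Q\,\mathrm{diag}(Q^\top v)\,x=v\},\qquad \mathcal C_{\mathrm{dom}}=\{x\in\mathcal C_{\mathrm{eig}}: I-Q\,\mathrm{diag}(x)\,Q^\top\succeq0\}.\] For any $x\in\mathcal C_{\mathrm{eig}}$, the probability weights $\alpha_i=x_i/(\mathbf 1^\top x)$ make $v$ an eigenvector of $\Sigma=\sum_{i=1}^N\alpha_iq_iq_i^\top$ with eigenvalue $(\mathbf 1^\top x)^{-1}$. If in addition $x\in\mathcal C_{\mathrm{dom}}$, then $v$ is a dominant eigenvector of $\Sigma$, i.e. $(\mathbf 1^\top x)^{-1}$ is the largest eigenvalue of $\Sigma$. Furthermore, $\mathcal C_{\mathrm{eig}}$ characterizes all such weightings: for every probability vector $\alpha\in\mathbb{R}^N_+$ for which $v$ is an eigenvector of $\sum_i\alpha_iq_iq_i^\top$ with nonzero eigenvalue $\lambda$, one has $\alpha/\lambda\in\mathcal C_{\mathrm{eig}}$ and $\alpha=x/(\mathbf 1^\top x)$ for $x=\alpha/\lambda$.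
   Context: $\mathcal S^{d-1}$ is the unit sphere in $\mathbb{R}^d$, $\mathbf 1$ is the all-ones vector, $\mathrm{diag}(u)$ is the diagonal matrix with diagonal $u$, inequalities $x\ge0$ are entrywise, and $A\succeq0$ means $A$ is positive semidefinite. *)

From mathcomp Require Import all_boot all_order all_algebra.
Set Implicit Arguments. Unset Strict Implicit. Unset Printing Implicit Defensive.
Import Order.TTheory GRing.Theory Num.Theory.
Local Open Scope ring_scope.

Definition sqnorm (R : realFieldType) (n : nat) (u : 'cV[R]_n) : R :=
  \sum_(k < n) u k 0 ^+ 2.

Definition sumv (R : realFieldType) (n : nat) (x : 'cV[R]_n) : R :=
  \sum_(i < n) x i 0.

Definition nonneg (R : realFieldType) (n : nat) (x : 'cV[R]_n) : Prop :=
  forall i, 0 <= x i 0.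

Definition psd (R : realFieldType) (n : nat) (A : 'M[R]_n) : Prop :=
  forall u : 'cV[R]_n, 0 <= (u^T *m A *m u) 0 0.

Definition Sigma (R : realFieldType) (d N : nat) (Q : 'M[R]_(d, N))
  (alpha : 'cV[R]_N) : 'M[R]_d :=
  \sum_(i < N) alpha i 0 *: (col i Q *m (col i Q)^T).

Definition Ceig (R : realFieldType) (d N : nat) (Q : 'M[R]_(d, N))
  (v : 'cV[R]_d) (x : 'cV[R]_N) : Prop :=
  nonneg x /\ Q *m diag_mx (Q^T *m v)^T *m x = v.

Definition Cdom (R : realFieldType) (d N : nat) (Q : 'M[R]_(d, N))
  (v : 'cV[R]_d) (x : 'cV[R]_N) : Prop :=
  Ceig Q v x /\ psd (1%:M - Q *m diag_mx x^T *m Q^T).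

From mathcomp Require Import all_boot all_order all_algebra.
From mathcomp Require Import ring.
Set Implicit Arguments. Unset Strict Implicit. Unset Printing Implicit Defensive.
Import Order.TTheory GRing.Theory Num.Theory.
Local Open Scope ring_scope.

(* Because diag(a) b = diag(b) a for vectors a and b, we get
   Q diag(Q^T v) x = Q diag(x) Q^T v = Sigma(x) v; hence C_eig consists of the
   x >= 0 with Sigma(x) v = v, and normalising x rescales Sigma by the same
   factor.  Sigma(x) = Q diag(x) Q^T is positive semidefinite for x >= 0, which
   forces lambda >= 0 in the characterisation, while I - Sigma(x) >= 0 bounds
   every eigenvalue of Sigma(x) by 1. *)

Section Vectors.
Variables (R : realFieldType) (n : nat).
Implicit Types (u x : 'cV[R]_n) (a : R).

Lemma sqnormE u : sqnorm u = (u^T *m u) 0 0.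
Proof. by rewrite mxE; apply: eq_bigr => k _; rewrite mxE expr2. Qed.

Lemma sqnorm_eq0 u : (sqnorm u == 0) = (u == 0).
Proof.
apply/eqP/eqP => [/psumr_eq0P u2_eq0 | ->]; last first.
  by rewrite /sqnorm big1 // => k _; rewrite mxE expr0n.
apply/matrixP => k j; rewrite ord1 mxE.
by apply/eqP; rewrite -sqrf_eq0 u2_eq0 // => l _; exact: sqr_ge0.
Qed.

Lemma sqnorm_gt0 u : u != 0 -> 0 < sqnorm u.
Proof.
by rewrite lt_def sqnorm_eq0 => ->; apply: sumr_ge0 => k _; exact: sqr_ge0.
Qed.

Lemma sumvZ a x : sumv (a *: x) = a * sumv x.
Proof. by rewrite /sumv mulr_sumr; apply: eq_bigr => k _; rewrite mxE. Qed.

Lemma nonnegZ a x : 0 <= a -> nonneg x -> nonneg (a *: x).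
Proof. by move=> a_ge0 x_ge0 k; rewrite mxE mulr_ge0. Qed.

Lemma sumv_eq0 x : nonneg x -> sumv x = 0 -> x = 0.
Proof.
move=> x_ge0 /psumr_eq0P x_eq0; apply/matrixP => k j.
by rewrite ord1 mxE x_eq0 // => l _; exact: x_ge0.
Qed.

Lemma diag_mx_trC (y : 'cV[R]_n) x : diag_mx y^T *m x = diag_mx x^T *m y.
Proof. by apply/matrixP => i j; rewrite ord1 !mul_diag_mx !mxE mulrC. Qed.

End Vectors.

Section Semidefinite.
Variable R : realFieldType.

Lemma psd_diag n (x : 'cV[R]_n) : nonneg x -> psd (diag_mx x^T).
Proof.
move=> x_ge0 u; rewrite mul_mx_diag !mxE.
apply: sumr_ge0 => k _; rewrite !mxE mulrAC -expr2.
exact: mulr_ge0 (sqr_ge0 _) (x_ge0 k).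
Qed.

Lemma psd_conj m n (A : 'M[R]_(m, n)) (B : 'M[R]_n) :
  psd B -> psd (A *m B *m A^T).
Proof.
move=> B_psd u; have := B_psd (A^T *m u).
by rewrite trmx_mul trmxK !mulmxA.
Qed.

Lemma psd_eigen_ge0 n (A : 'M[R]_n) (u : 'cV[R]_n) lambda :
  psd A -> A *m u = lambda *: u -> u != 0 -> 0 <= lambda.
Proof.
move=> A_psd Au u_neq0; have := A_psd u.
rewrite -mulmxA Au -scalemxAr mxE -sqnormE.
by rewrite pmulr_lge0 // sqnorm_gt0.
Qed.

Lemma psd_subr_eigenvalue_le1 n (A : 'M[R]_n) mu :
  psd (1%:M - A) -> eigenvalue A mu -> mu <= 1.
Proof.
move=> IA_psd /eigenvalueP[u uA u_neq0].
have := IA_psd u^T.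
rewrite trmxK mulmxBr mulmx1 mulmxBl uA -scalemxAl.
rewrite -{1}[u *m u^T]scale1r -scalerBl mxE -[u in u *m _]trmxK -sqnormE.
by rewrite pmulr_lge0 ?subr_ge0 // sqnorm_gt0 // trmx_eq0.
Qed.

End Semidefinite.

Lemma eigenvalueZ (F : fieldType) n (A : 'M[F]_n) a mu :
  a != 0 -> eigenvalue (a *: A) mu -> eigenvalue A (a^-1 * mu).
Proof.
move=> a_neq0 /eigenvalueP[u uA u_neq0]; apply/eigenvalueP; exists u => //.
by rewrite -scalerA -uA -scalemxAr scalerA mulVf ?scale1r.
Qed.

Section Sigma.
Variables (R : realFieldType) (d N : nat) (Q : 'M[R]_(d, N)).
Implicit Types (x : 'cV[R]_N) (v : 'cV[R]_d).

Lemma Sigma_mx x : Sigma Q x = Q *m diag_mx x^T *m Q^T.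
Proof.
apply/matrixP => i j; rewrite /Sigma summxE mul_mx_diag !mxE.
apply: eq_bigr => k _; rewrite !mxE big_ord1 !mxE; ring.
Qed.

Lemma SigmaZ a x : Sigma Q (a *: x) = a *: Sigma Q x.
Proof.
by rewrite /Sigma scaler_sumr; apply: eq_bigr => k _; rewrite mxE scalerA.
Qed.

Lemma Sigma_psd x : nonneg x -> psd (Sigma Q x).
Proof. by move=> x_ge0; rewrite Sigma_mx; apply/psd_conj/psd_diag. Qed.

Lemma mul_diag_trmx_Sigma x v :
  Q *m diag_mx (Q^T *m v)^T *m x = Sigma Q x *m v.
Proof. by rewrite -mulmxA diag_mx_trC Sigma_mx !mulmxA. Qed.

Lemma CeigE v x : Ceig Q v x <-> nonneg x /\ Sigma Q x *m v = v.
Proof. by rewrite /Ceig mul_diag_trmx_Sigma. Qed.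

Lemma Ceig_sumv_gt0 v x : v != 0 -> Ceig Q v x -> 0 < sumv x.
Proof.
move=> v_neq0 /CeigE[x_ge0 Sv]; rewrite lt_def sumr_ge0 ?andbT //.
apply/eqP => /(sumv_eq0 x_ge0) x_eq0; move: Sv v_neq0.
by rewrite x_eq0 Sigma_mx trmx0 raddf0 mulmx0 !mul0mx => <-; rewrite eqxx.
Qed.

End Sigma.

Theorem proposition5 (R : realFieldType) (d N : nat) (Q : 'M[R]_(d, N))
  (v : 'cV[R]_d)
  (hQ : forall i : 'I_N, sqnorm (col i Q) = 1)
  (hv : sqnorm v = 1) :
  (* every x in C_eig gives probability weights alpha = x / 1^T x making v
     an eigenvector of Sigma with eigenvalue (1^T x)^-1 *)
  (forall x : 'cV[R]_N, Ceig Q v x ->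
     let alpha := (sumv x)^-1 *: x in
     nonneg alpha /\ sumv alpha = 1 /\
     Sigma Q alpha *m v = (sumv x)^-1 *: v) /\
  (* if moreover x in C_dom, (1^T x)^-1 is the largest eigenvalue of Sigma *)
  (forall x : 'cV[R]_N, Cdom Q v x ->
     forall mu : R, eigenvalue (Sigma Q ((sumv x)^-1 *: x)) mu ->
     mu <= (sumv x)^-1) /\
  (* characterization *)
  (forall (alpha : 'cV[R]_N) (lambda : R),
     nonneg alpha -> sumv alpha = 1 -> lambda != 0 ->
     Sigma Q alpha *m v = lambda *: v ->
     let x := lambda^-1 *: alpha in
     Ceig Q v x /\ alpha = (sumv x)^-1 *: x).
Proof.
have v_neq0 : v != 0 by rewrite -sqnorm_eq0 hv oner_eq0.
split; [|split].
- move=> x x_Ceig alpha; have s_gt0 := Ceig_sumv_gt0 v_neq0 x_Ceig.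
  case/CeigE: x_Ceig => x_ge0 Sv.
  split; [|split].
  + by apply: nonnegZ; rewrite // invr_ge0 ltW.
  + by rewrite sumvZ mulVf // gt_eqF.
  + by rewrite SigmaZ -scalemxAl Sv.
- move=> x [x_Ceig IS_psd] mu; have s_gt0 := Ceig_sumv_gt0 v_neq0 x_Ceig.
  rewrite SigmaZ => /eigenvalueZ; rewrite invr_eq0 invrK gt_eqF // => /(_ isT).
  rewrite -Sigma_mx in IS_psd; move/(psd_subr_eigenvalue_le1 IS_psd).
  by rewrite -[_^-1]mulr1 ler_pdivlMl.
- move=> alpha lambda alpha_ge0 alpha_sum lambda_neq0 Sv x.
  have lambda_ge0 := psd_eigen_ge0 (Sigma_psd Q alpha_ge0) Sv v_neq0.
  split; first apply/CeigE; first split.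
  + by apply: nonnegZ; rewrite ?invr_ge0.
  + by rewrite SigmaZ -scalemxAl Sv scalerA mulVf ?scale1r.
  + by rewrite sumvZ alpha_sum mulr1 invrK scalerA divff ?scale1r.
Qed.
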